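(* For any sequence of pairs of probability distributions $\{(Q_n,G_n)\}$, one has $0\le\underline{\beta}^*\le\overline{\beta}^*\le1$.
   Context: For $\beta\ge0$ let $V_n(\beta)=\mathrm{TV}\big(Q_n^{n},((1-n^{-\beta})Q_n+n^{-\beta}G_n)^{n}\big)$, where $\mathrm{TV}(P,Q)=\sup_A|P(A)-Q(A)|$ is the total variation distance and $P^n$ the $n$-fold product measure. Define $\underline{\beta}^*=\sup\{\beta\ge0: V_n(\beta)\to1\}$ and $\overline{\beta}^*=\inf\{\beta\ge0:V_n(\beta)\to0\}$ (limits as $n\to\infty$). These are the fundamental limits for testing $H_0:Y_i\stackrel{iid}{\sim}Q_n$ versus $H_1:Y_i\stackrel{iid}{\sim}(1-n^{-\beta})Q_n+n^{-\beta}G_n$, $i=1,\dots,n$. *)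

From HB Require Import structures.
From mathcomp Require Import all_boot all_order all_algebra.
From mathcomp Require Import all_classical all_reals all_analysis.

Set Implicit Arguments.
Unset Strict Implicit.
Unset Printing Implicit Defensive.

Import Order.TTheory GRing.Theory Num.Theory.
Import numFieldNormedType.Exports.

Local Open Scope classical_set_scope.
Local Open Scope ring_scope.
Local Open Scope ereal_scope.

Definition mixture {d} {T : measurableType d} {R : realType}
    (eps : R) (Q G : set T -> \bar R) : set T -> \bar R :=
  fun A => (1 - eps)%:E * Q A + eps%:E * G A.

(* n-fold product measure P^n on n.-tuple T (whose sigma-algebra is the
   product sigma-algebra generated by the coordinate maps), defined by
   iterated integration:  P^0 = dirac at the empty tuple,
   P^(m+1)(A) = \int P(dx) P^m {t | x :: t \in A}. *)
Fixpoint prodn {d} {T : measurableType d} {R : realType}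
    (P : set T -> \bar R) (n : nat) : set (n.-tuple T) -> \bar R :=
  match n return set (n.-tuple T) -> \bar R with
  | 0%N => fun A => ((\1_A [tuple]) : R)%:E
  | m.+1 => fun A => \int[P]_x (@prodn d T R P m [set t | A (cons_tuple x t)])
  end.
Arguments prodn {d T R} P n.

Definition TV {d} {U : measurableType d} {R : realType}
    (P P' : set U -> \bar R) : \bar R :=
  ereal_sup [set `|P A - P' A| | A in measurable].

Definition Vn {d} {T : measurableType d} {R : realType}
    (Q G : nat -> probability T R) (n : nat) (beta : R) : \bar R :=
  TV (prodn (Q n) n)
     (prodn (mixture ((n%:R) `^ (- beta)) (Q n) (G n)) n).

(* lower beta* = sup {beta >= 0 : V_n(beta) -> 1}, with the convention
   sup of the empty set = 0 (all candidates are >= 0). *)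
Definition beta_low {d} {T : measurableType d} {R : realType}
    (Q G : nat -> probability T R) : \bar R :=
  ereal_sup ([set 0] `|`
    [set b%:E | b in [set b : R | (0 <= b)%R /\
                        (fun n => Vn Q G n b) @ \oo --> 1]]).

(* upper beta* = inf {beta >= 0 : V_n(beta) -> 0}  (inf of empty = +oo). *)
Definition beta_up {d} {T : measurableType d} {R : realType}
    (Q G : nat -> probability T R) : \bar R :=
  ereal_inf
    [set b%:E | b in [set b : R | (0 <= b)%R /\
                        (fun n => Vn Q G n b) @ \oo --> 0]].

From HB Require Import structures.
From mathcomp Require Import all_boot all_order all_algebra.
From mathcomp Require Import all_classical all_reals all_analysis.
From mathcomp Require Import measurable_realfun.
From mathcomp.algebra_tactics Require Import ring lra.

(* V_n is nonincreasing in beta and tends to 0 for beta > 1, which gives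
   beta_low <= beta_up and beta_up <= 1; beta_low >= 0 holds by definition.

   Decay: the mixture M with weight eps = n^-beta dominates (1 - eps) Q, so
   M^n dominates (1 - eps)^n Q^n and V_n(beta) <= 1 - (1 - eps)^n <= n eps.

   Monotonicity: for beta' >= beta the mixture with weight t eps (t <= 1) is
   t M + (1 - t) Q.  Its n-fold product is the image of M^n under the Markov
   kernel that keeps each coordinate with probability t and redraws it from Q
   otherwise, and the same kernel fixes Q^n.  Dually the kernel acts on
   [0,1]-valued test functions ([resample]), and TV bounds the difference of
   the integrals of such functions, so TV can only decrease. *)

Set Implicit Arguments.
Unset Strict Implicit.
Unset Printing Implicit Defensive.

Import Order.TTheory GRing.Theory Num.Theory.
Import numFieldNormedType.Exports.

Local Open Scope classical_set_scope.
Local Open Scope ring_scope.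
Local Open Scope ereal_scope.

Lemma fineK01 (R : realType) (x : \bar R) : 0 <= x <= 1 -> (fine x)%:E = x.
Proof.
by move=> /andP[x0 x1]; rewrite fineK // ge0_fin_numE // (le_lt_trans x1) ?ltry.
Qed.

Section probability_TV.
Context d (U : measurableType d) (R : realType).
Implicit Types (P Q : probability U R) (A : set U).

Lemma probability_fineE P A : measurable A ->
  P A = (fine (P A))%:E /\ (0 <= fine (P A) <= 1)%R.
Proof.
move=> mA; have PA01 : 0 <= P A <= 1 by rewrite measure_ge0 probability_le1.
by rewrite -!lee_fin fineK01.
Qed.

Lemma integral_itv01 P (h : U -> R) : measurable_fun setT h ->
  (forall x, (0 <= h x <= 1)%R) -> 0 <= \int[P]_x (h x)%:E <= 1.
Proof.
move=> mh h01; have h0 x : 0 <= (h x)%:E by rewrite lee_fin; case/andP: (h01 x).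
rewrite integral_ge0 //=; apply: (@le_trans _ _ (\int[P]_x (cst 1 x))).
  apply: ge0_le_integral => // [|x _]; first exact/measurable_EFinP.
  by rewrite lee_fin; case/andP: (h01 x).
by rewrite integral_cst // mul1e probability_le1.
Qed.

Lemma eq_TV (P1 P2 P1' P2' : set U -> \bar R) :
  (forall A, measurable A -> P1 A = P2 A) ->
  (forall A, measurable A -> P1' A = P2' A) ->
  TV P1 P1' = TV P2 P2'.
Proof.
move=> h h'; rewrite /TV; congr ereal_sup; apply/seteqP.
by split=> _ [A mA <-]; exists A => //; rewrite h // h'.
Qed.

Lemma le_TV P Q A : measurable A -> `|P A - Q A| <= TV P Q.
Proof. by move=> mA; apply: ereal_sup_ubound; exists A. Qed.

Lemma TV_itv01 P Q : 0 <= TV P Q <= 1.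
Proof.
apply/andP; split.
  by apply: le_trans (le_TV P Q measurable0); rewrite !measure0 subee.
apply/ereal_supP => _ [A mA <-].
have [-> /andP[? ?]] := probability_fineE P mA.
have [-> /andP[? ?]] := probability_fineE Q mA.
by rewrite -EFinB lee_fin ler_norml; apply/andP; split; lra.
Qed.

Lemma TV_sym P Q : TV P Q = TV Q P.
Proof.
rewrite /TV; congr ereal_sup; apply/seteqP; split => _ [A mA <-]; exists A => //;
  case: (probability_fineE P mA) => -> _; case: (probability_fineE Q mA) => -> _;
  by rewrite -!EFinB /= distrC.
Qed.

End probability_TV.

Lemma sum_ord_ltn (N n : nat) : (\sum_(k < N) (k < n) = minn n N)%N.
Proof.
elim: N => [|N IH]; first by rewrite big_ord0 minn0.
rewrite big_ord_recr /= IH; case: (ltnP N n) => Nn /=.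
  by rewrite addn1; apply/esym/minn_idPr.
by rewrite addn0; apply/esym/minn_idPl; apply: leqW.
Qed.

Lemma card_levels_le (R : realType) (N : nat) (y : R) : (0 < N)%N ->
  (0 <= y <= 1)%R ->
  (N%:R * y - 1 <= \sum_(k < N) ((k.+1)%:R / N%:R <= y)%R%:R <= N%:R * y)%R.
Proof.
move=> N0 /andP[y0 y1].
have Ny0 : (0 <= N%:R * y)%R by rewrite mulr_ge0.
have /andP[nl nu] := truncn_itv Ny0; set n := Num.truncn _ in nl nu.
have nN : (n <= N)%N.
  by rewrite -(ler_nat R); apply: le_trans nl _; rewrite -[leRHS]mulr1 ler_wpM2l.
have -> : (\sum_(k < N) ((k.+1)%:R / N%:R <= y)%R%:R = \sum_(k < N) (k < n)%N%:R :> R)%R.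
  apply: eq_bigr => k _; congr (_%:R); congr nat_of_bool.
  rewrite ler_pdivrMr ?ltr0n // mulrC; apply/idP/idP => h.
    rewrite ltnNge; apply/negP => kn.
    have : ((n.+1)%:R <= N%:R * y :> R)%R by apply: le_trans h; rewrite ler_nat.
    by rewrite leNgt nu.
  by apply: le_trans nl; rewrite ler_nat.
rewrite -natr_sum sum_ord_ltn (minn_idPl nN) nl andbT lerBlDr.
by rewrite natr1; exact: ltW.
Qed.

Section TV_test_functions.
Context d (U : measurableType d) (R : realType).
Variable g : U -> R.
Hypotheses (mg : measurable_fun setT g) (g01 : forall x, (0 <= g x <= 1)%R).

(* [g] is within [1/N] of the staircase [\sum_k \1_(level_set k) / N], and
   each level set contributes at most [TV P P'] to the difference of integrals. *)
Definition level_set (N : nat) (k : 'I_N) := [set x | ((k.+1)%:R / N%:R <= g x)%R].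

Lemma measurable_level_set N (k : 'I_N) : measurable (level_set k).
Proof.
have := mg measurableT (@measurable_itv _ `[((k.+1)%:R / N%:R)%R, +oo[).
by rewrite setTI; congr measurable; apply/seteqP; split => x /=; rewrite in_itv andbT.
Qed.

Lemma integral_level_sets (P : probability U R) (N : nat) : (0 < N)%N ->
  (N%:R * fine (\int[P]_x (g x)%:E) - 1
    <= \sum_(k < N) fine (P (level_set k))
    <= N%:R * fine (\int[P]_x (g x)%:E))%R.
Proof.
move=> N0; pose s x := \sum_(k < N) (\1_(level_set k) x : R)%:E.
have ms : measurable_fun setT s.
  apply: emeasurable_sum => k; apply/measurable_EFinP.
  exact/measurable_indic/measurable_level_set.
have s0 x : 0 <= s x by apply: sume_ge0 => k _; rewrite lee_fin.
have sE x : s x = (\sum_(k < N) ((k.+1)%:R / N%:R <= g x)%R%:R)%:E.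
  rewrite /s sumEFin; congr EFin; apply: eq_bigr => k _.
  by rewrite indicE; congr (nat_of_bool _)%:R; apply/idP/idP; rewrite inE.
have int_s : \int[P]_x s x = (\sum_(k < N) fine (P (level_set k)))%:E.
  rewrite ge0_integral_sum //; last first.
    by move=> k; apply/measurable_EFinP; exact/measurable_indic/measurable_level_set.
  rewrite -sumEFin; apply: eq_bigr => k _; have mAk := measurable_level_set k.
  by rewrite integral_indic // setIT; case: (probability_fineE P mAk).
have mNg : measurable_fun setT (fun x => (N%:R * g x)%:E).
  by apply/measurable_EFinP; apply: measurable_funM => //; exact: measurable_cst.
have int_Ng : \int[P]_x (N%:R * g x)%:E = (N%:R * fine (\int[P]_x (g x)%:E))%:E.
  under eq_integral do rewrite EFinM.
  rewrite ge0_integralZl //; last 2 first.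
  - exact/measurable_EFinP.
  - by move=> x _; rewrite lee_fin; case/andP: (g01 x).
  by rewrite EFinM fineK01 // integral_itv01.
apply/andP; split.
  rewrite lerBlDr -lee_fin -int_Ng EFinD -int_s.
  apply: (@le_trans _ _ (\int[P]_x (s x + 1))).
    apply: ge0_le_integral => //.
    - by move=> x _; rewrite lee_fin mulr_ge0 //; case/andP: (g01 x).
    - by apply: emeasurable_funD => //; exact: measurable_cst.
    - move=> x _; rewrite sE -EFinD lee_fin -lerBlDr.
      by case/andP: (card_levels_le N0 (g01 x)).
  rewrite ge0_integralD //.
  by apply: leeD2l; rewrite integral_cst // mul1e probability_le1.
rewrite -lee_fin -int_Ng -int_s; apply: ge0_le_integral => // x _.
by rewrite sE lee_fin; case/andP: (card_levels_le N0 (g01 x)).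
Qed.

Lemma integral_sub_le_TV (P P' : probability U R) :
  \int[P]_x (g x)%:E - \int[P']_x (g x)%:E <= TV P P'.
Proof.
rewrite -(fineK01 (TV_itv01 P P')) -(fineK01 (integral_itv01 P mg g01)).
rewrite -(fineK01 (integral_itv01 P' mg g01)) -EFinB lee_fin.
apply/ler_addgt0Pr => e e0.
have [N N0 Ne] : exists2 N : nat, (0 < N)%N & (1 < N%:R * e)%R.
  exists (Num.truncn e^-1).+1 => //.
  have ie0 : (0 <= e^-1)%R by rewrite invr_ge0 ltW.
  have /andP[_ eN] := truncn_itv ie0.
  by rewrite -ltr_pdivrMr // div1r.
have /andP[la _] := integral_level_sets P N0.
have /andP[_ lb] := integral_level_sets P' N0.
have ld : (\sum_(k < N) fine (P (level_set k)) - \sum_(k < N) fine (P' (level_set k))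
           <= N%:R * fine (TV P P'))%R.
  rewrite -sumrB -[in X in (X * _)%R](card_ord N) mulr_natl -sumr_const.
  apply: ler_sum => k _.
  have := le_TV P P' (measurable_level_set k).
  case: (probability_fineE P (measurable_level_set k)) => -> _.
  case: (probability_fineE P' (measurable_level_set k)) => -> _.
  by rewrite -(fineK01 (TV_itv01 P P')) -EFinB lee_fin => /ler_normlP[].
have N0' : (0 < N%:R :> R)%R by rewrite ltr0n.
nra.
Qed.

End TV_test_functions.

Section tuple_product.
Context d (T : measurableType d) (R : realType).
Implicit Types (P : probability T R).

Definition cons_pair m (p : T * m.-tuple T) : m.+1.-tuple T := cons_tuple p.1 p.2.

Lemma measurable_cons_pair m : measurable_fun setT (@cons_pair m).
Proof.
have -> : @cons_pair m = (fun p => [the m.+1.-tuple T of p.1 :: p.2]).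
  by apply/funext => p; apply/val_inj.
exact: measurable_cons.
Qed.

HB.instance Definition _ m :=
  isMeasurableFun.Build _ _ _ _ (@cons_pair m) (@measurable_cons_pair m).

(* [prodn] is only a set function; this is the same product built as a
   probability measure. *)
Fixpoint prodp P n : probability (n.-tuple T) R :=
  match n with
  | 0%N => [the probability _ _ of dirac [tuple]]
  | m.+1 => distribution (P \x prodp P m) (@cons_pair m)
  end.

Lemma measurable_cons_tuple m (x : T) :
  measurable_fun setT (fun y : m.-tuple T => cons_tuple x y).
Proof. exact: measurable_fun_pair2 (@measurable_cons_pair m). Qed.

Lemma measurable_cons_section m (A : set (m.+1.-tuple T)) (x : T) :
  measurable A -> measurable [set y : m.-tuple T | A (cons_tuple x y)].
Proof. by move=> mA; rewrite -[X in measurable X]setTI; exact: measurable_cons_tuple. Qed.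

Lemma measurable_prodp_section P m (A : set (m.+1.-tuple T)) : measurable A ->
  measurable_fun setT (fun x => prodp P m [set y | A (cons_tuple x y)]).
Proof.
move=> mA; have mB : measurable (@cons_pair m @^-1` A).
  by rewrite -[X in measurable X]setTI; exact: measurable_cons_pair.
have := measurable_fun_xsection (prodp P m) mB.
congr measurable_fun; apply/funext => x /=; congr (prodp P m _).
by apply/seteqP; split => y /=; rewrite /xsection /= in_setE.
Qed.

Lemma prodpS P m (A : set (m.+1.-tuple T)) : measurable A ->
  prodp P m.+1 A = \int[P]_x prodp P m [set y | A (cons_tuple x y)].
Proof.
move=> mA /=; rewrite /distribution /pushforward /product_measure1.
apply: eq_integral => x _ /=; congr (prodp P m _).
by apply/seteqP; split => y /=; rewrite /xsection /= in_setE.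
Qed.

Lemma integral_prodpS P m (f : m.+1.-tuple T -> \bar R) :
  measurable_fun setT f -> (forall z, 0 <= f z) ->
  \int[prodp P m.+1]_z f z = \int[P]_x \int[prodp P m]_y f (cons_tuple x y).
Proof.
move=> mf f0 /=.
rewrite /distribution (ge0_integral_pushforward (@measurable_cons_pair m)) //.
rewrite preimage_setT (fubini_tonelli1 (f \o @cons_pair m)) // => [|p].
- exact: measurableT_comp mf (@measurable_cons_pair m).
- exact: f0.
Qed.

Lemma prodnE P n (A : set (n.-tuple T)) : measurable A -> prodn P n A = prodp P n A.
Proof.
elim: n A => [|m IH] A mA; first by rewrite /= diracE indicE.
rewrite prodpS //=; apply: eq_integral => x _.
by apply: IH; exact: measurable_cons_section.
Qed.

Lemma prodp_dominated (P M : probability T R) (c : R) : (0 <= c)%R ->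
  (forall h : T -> \bar R, measurable_fun setT h -> (forall x, 0 <= h x) ->
     c%:E * \int[P]_x h x <= \int[M]_x h x) ->
  forall n (A : set (n.-tuple T)), measurable A ->
  (c ^+ n)%:E * prodp P n A <= prodp M n A.
Proof.
move=> c0 PM; elim => [|m IH] A mA; first by rewrite expr0 mul1e.
have mAx Pr := measurable_prodp_section Pr mA.
rewrite !prodpS // exprS EFinM -muleA.
apply: le_trans (PM _ (mAx M) (fun x => measure_ge0 _ _)).
apply: lee_pmul => //.
  by rewrite mule_ge0 ?lee_fin ?exprn_ge0 // integral_ge0.
rewrite -ge0_integralZl ?lee_fin ?exprn_ge0 //.
apply: ge0_le_integral => //; first by move=> x _; rewrite mule_ge0 ?lee_fin ?exprn_ge0.
- exact: measurable_funeM.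
- by move=> x _; apply: IH; exact: measurable_cons_section.
Qed.

End tuple_product.

Section mixture_probability.
Context d (T : measurableType d) (R : realType).
Variables (e : R) (e01 : (0 <= e <= 1)%R) (P1 P2 : probability T R).

(* The unused proof argument keeps [e01] among the parameters, as the
   instances below need it. *)
Definition mixturep (_ : (0 <= e <= 1)%R) := mixture e P1 P2.
Local Notation M := (mixturep e01).

Let w1 : {nonneg R} :=
  NngNum (ltac:(by case/andP: e01 => _ h; rewrite subr_ge0) : (0 <= 1 - e)%R).
Let w2 : {nonneg R} := NngNum (ltac:(by case/andP: e01) : (0 <= e)%R).

Lemma mixturep_measure_add : M = measure_add (mscale w1 P1) (mscale w2 P2).
Proof. by apply/funext => A; rewrite measure_addE. Qed.

Let mixturep0 : M set0 = 0.
Proof. by rewrite /mixturep /mixture !measure0 !mule0 adde0. Qed.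

Let mixturep_ge0 A : 0 <= M A.
Proof. by rewrite mixturep_measure_add measure_addE adde_ge0. Qed.

Let mixturep_sigma_additive : semi_sigma_additive M.
Proof. by rewrite mixturep_measure_add; exact: measure_semi_sigma_additive. Qed.

HB.instance Definition _ :=
  isMeasure.Build _ _ _ M mixturep0 mixturep_ge0 mixturep_sigma_additive.

Let mixturep_setT : M setT = 1.
Proof. by rewrite /mixturep /mixture !probability_setT !mule1 -EFinD subrK. Qed.

HB.instance Definition _ := Measure_isProbability.Build _ _ _ M mixturep_setT.

Lemma integral_mixturep (h : T -> \bar R) :
  measurable_fun setT h -> (forall x, 0 <= h x) ->
  \int[M]_x h x = (1 - e)%:E * \int[P1]_x h x + e%:E * \int[P2]_x h x.
Proof.
move=> mh h0; rewrite (eq_measure_integral (measure_add (mscale w1 P1) (mscale w2 P2))).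
  rewrite ge0_integral_measure_add // !ge0_integral_mscale //.
by move=> A _ _; exact: (congr1 (fun f => f A) mixturep_measure_add).
Qed.

End mixture_probability.

Lemma behead_cons_tuple (T : Type) n (x : T) (y : n.-tuple T) :
  behead_tuple (cons_tuple x y) = y.
Proof. exact: val_inj. Qed.

Lemma measurable_behead_tuple d (T : measurableType d) m :
  measurable_fun setT (@behead_tuple m.+1 T).
Proof.
have -> : @behead_tuple m.+1 T = (fun x => [tuple of behead x]).
  by apply/funext => x; apply/val_inj.
exact: measurable_behead.
Qed.

Lemma measurable_thead d (T : measurableType d) m : measurable_fun setT (@thead m T).
Proof. exact: (@measurable_tnth _ T m.+1 ord0). Qed.

Section resampling.
Context d (T : measurableType d) (R : realType).
Variables (Q : probability T R) (t : R).
Hypothesis t01 : (0 <= t <= 1)%R.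

(* [resample f z] is the expectation of [f] at the random tuple obtained
   from [z] by keeping each coordinate with probability [t] and redrawing
   it from [Q] otherwise. *)
Fixpoint resample n : (n.-tuple T -> R) -> n.-tuple T -> R :=
  match n with
  | 0%N => id
  | m.+1 => fun f z =>
     (t * resample (fun y => f (cons_tuple (thead z) y)) (behead_tuple z)
      + (1 - t) * fine (\int[Q]_x (resample (fun y => f (cons_tuple x y)) (behead_tuple z))%:E))%R
  end.

Let convex_itv01 (a b : R) : (0 <= a <= 1)%R -> (0 <= b <= 1)%R ->
  (0 <= t * a + (1 - t) * b <= 1)%R.
Proof. by case/andP: t01 => t0 t1 /andP[a0 a1] /andP[b0 b1]; apply/andP; split; nra. Qed.

(* The parameter space [U] makes the induction go through: the coordinate
   split off at each step joins the parameter. *)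
Lemma resample_param n dU (U : measurableType dU) (F : U * n.-tuple T -> R) :
  measurable_fun setT F -> (forall p, (0 <= F p <= 1)%R) ->
  measurable_fun setT (fun p : U * n.-tuple T => resample (fun y => F (p.1, y)) p.2) /\
  (forall p : U * n.-tuple T, (0 <= resample (fun y => F (p.1, y)) p.2 <= 1)%R).
Proof.
elim: n dU U F => [|m IH] dU U F mF F01.
  by split => [|p]; [apply: eq_measurable_fun mF => -[]|exact: F01].
pose F' (q : (U * T) * m.-tuple T) := F (q.1.1, cons_tuple q.1.2 q.2).
have mF' : measurable_fun setT F'.
  apply: measurableT_comp mF _; apply: measurable_fun_pair.
    exact: measurableT_comp measurable_fst measurable_fst.
  exact: measurableT_comp (@measurable_cons_pair _ _ m)
    (measurable_fun_pair (measurableT_comp measurable_snd measurable_fst) measurable_snd).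
have [mG G01] := IH _ _ F' mF' (fun q => F01 _).
set G := fun q => _ in mG G01.
pose H (q : (U * m.-tuple T) * T) := (G ((q.1.1, q.2), q.1.2))%:E.
have mH : measurable_fun setT H.
  apply/measurable_EFinP; apply: measurableT_comp mG _.
  apply: measurable_fun_pair; last exact: measurableT_comp measurable_snd measurable_fst.
  apply: measurable_fun_pair; last exact: measurable_snd.
  exact: measurableT_comp measurable_fst measurable_fst.
have H0 q : 0 <= H q by rewrite lee_fin; case/andP: (G01 ((q.1.1, q.2), q.1.2)).
have mFH := measurable_fun_fubini_tonelli_F (m2:=Q) H mH H0.
have FH01 q : 0 <= fubini_F Q H q <= 1.
  apply: integral_itv01 => [|x]; last exact: G01.
  apply: measurableT_comp mG _.
  apply: measurable_fun_pair; last exact: measurable_cst.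
  by apply: measurable_fun_pair; [exact: measurable_cst|exact: measurable_id].
split.
  apply: measurable_funD; apply: measurable_funM; try exact: measurable_cst.
    exact: measurableT_comp mG (measurable_fun_pair (measurable_fun_pair measurable_fst
      (measurableT_comp (@measurable_thead _ _ m) measurable_snd))
      (measurableT_comp (@measurable_behead_tuple _ _ m) measurable_snd)).
  exact: measurableT_comp (fine_measurable measurableT) (measurableT_comp mFH
     (measurable_fun_pair measurable_fst
       (measurableT_comp (@measurable_behead_tuple _ _ m) measurable_snd))).
move=> [u z]; apply: convex_itv01; first exact: (G01 ((u, thead z), behead_tuple z)).
by rewrite -!lee_fin fineK01; exact: (FH01 (u, behead_tuple z)).
Qed.

Lemma resample_itv n (f : n.-tuple T -> R) :
  measurable_fun setT f -> (forall z, (0 <= f z <= 1)%R) ->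
  measurable_fun setT (resample f) /\ (forall z, (0 <= resample f z <= 1)%R).
Proof.
move=> mf f01.
have [mK K01] := @resample_param n _ T (fun p => f p.2)
  (measurableT_comp mf measurable_snd) (fun p => f01 _).
by split=> [|z]; [exact: (measurable_fun_pair2 point mK)|exact: K01 (point, z)].
Qed.

Lemma integral_resample_cons m (mu : probability (m.-tuple T) R)
    (f : m.+1.-tuple T -> R) (x : T) :
  measurable_fun setT f -> (forall z, (0 <= f z <= 1)%R) ->
  \int[mu]_y (resample f (cons_tuple x y))%:E =
  t%:E * \int[mu]_y (resample (fun y => f (cons_tuple x y)) y)%:E
  + (1 - t)%:E * \int[Q]_x' \int[mu]_y (resample (fun y => f (cons_tuple x' y)) y)%:E.
Proof.
move=> mf f01.
pose F (p : T * m.-tuple T) := f (cons_tuple p.1 p.2).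
have mF : measurable_fun setT F := measurableT_comp mf (@measurable_cons_pair _ _ m).
have [mK K01] := resample_param mF (fun p => f01 _).
set K := fun p => _ in mK K01.
have mKE : measurable_fun setT (EFin \o K) by exact/measurable_EFinP.
have K0 p : 0 <= (K p)%:E by rewrite lee_fin; case/andP: (K01 p).
have mIQK : measurable_fun setT (fun y => \int[Q]_x' (K (x', y))%:E).
  exact: (measurable_fun_fubini_tonelli_G (m1 := Q) _ mKE K0).
have IQK01 y : 0 <= \int[Q]_x' (K (x', y))%:E <= 1.
  by apply: integral_itv01 => [|x']; [exact: measurable_fun_pair1 mK|exact: K01].
case/andP: t01 => t0 t1.
transitivity (\int[mu]_y (t%:E * (K (x, y))%:E +
    (1 - t)%:E * \int[Q]_x' (K (x', y))%:E)).
  apply: eq_integral => y _.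
  by rewrite /= behead_cons_tuple EFinD !EFinM (fineK01 (IQK01 y)).
rewrite ge0_integralD //; last 4 first.
- by move=> y _; apply: mule_ge0; [rewrite lee_fin|exact: K0].
- exact: measurable_funeM (measurable_fun_pair2 x mKE).
- by move=> y _; rewrite mule_ge0 ?lee_fin ?subr_ge0 //; case/andP: (IQK01 y).
- exact: measurable_funeM.
rewrite !ge0_integralZl ?lee_fin ?subr_ge0 //; last 2 first.
- by move=> y _; case/andP: (IQK01 y).
- exact: measurable_fun_pair2 x mKE.
by rewrite (fubini_tonelli (fun p => (K (p.1, p.2))%:E)).
Qed.

Section transfer.
Variables (P P' : probability T R).
Hypothesis P'E : forall h : T -> \bar R, measurable_fun setT h -> (forall x, 0 <= h x) ->
  \int[P']_x h x = t%:E * \int[P]_x h x + (1 - t)%:E * \int[Q]_x h x.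

Lemma integral_resample n (f : n.-tuple T -> R) :
  measurable_fun setT f -> (forall z, (0 <= f z <= 1)%R) ->
  \int[prodp P n]_z (resample f z)%:E = \int[prodp P' n]_z (f z)%:E.
Proof.
elim: n f => [//|m IH] f mf f01.
have [mKf Kf01] := resample_itv mf f01.
pose F (p : T * m.-tuple T) := f (cons_tuple p.1 p.2).
have mF : measurable_fun setT F := measurableT_comp mf (@measurable_cons_pair _ _ m).
have mFE : measurable_fun setT (EFin \o F) by exact/measurable_EFinP.
have F0 p : 0 <= (F p)%:E by rewrite lee_fin; case/andP: (f01 (cons_tuple p.1 p.2)).
pose psi x := \int[prodp P' m]_y (F (x, y))%:E.
have mpsi : measurable_fun setT psi :=
  measurable_fun_fubini_tonelli_F (m2 := prodp P' m) _ mFE F0.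
have psi01 x : 0 <= psi x <= 1.
  by apply: integral_itv01 => [|y]; [exact: measurable_fun_pair2 x mF|exact: f01].
have psi0 x : 0 <= psi x by case/andP: (psi01 x).
have IQpsi0 : 0 <= \int[Q]_x psi x by exact: integral_ge0.
rewrite !integral_prodpS //; last 4 first.
- exact/measurable_EFinP.
- by move=> z; rewrite lee_fin; case/andP: (f01 z).
- exact/measurable_EFinP.
- by move=> z; rewrite lee_fin; case/andP: (Kf01 z).
have IHx x : \int[prodp P m]_y (resample (fun y => f (cons_tuple x y)) y)%:E = psi x.
  by apply: IH => [|y]; [exact: measurable_fun_pair2 x mF|exact: f01].
have inner x : \int[prodp P m]_y (resample f (cons_tuple x y))%:E =
    t%:E * psi x + (1 - t)%:E * \int[Q]_x' psi x'.
  rewrite integral_resample_cons // IHx; congr (_ + _ * _).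
  by apply: eq_integral => x' _; exact: IHx.
under eq_integral => x _ do rewrite inner.
case/andP: t01 => t0 t1.
rewrite ge0_integralD //; last 3 first.
- by move=> x _; rewrite mule_ge0 ?lee_fin.
- exact: measurable_funeM.
- by move=> x _; rewrite mule_ge0 ?lee_fin ?subr_ge0.
rewrite ge0_integralZl ?lee_fin //.
have -> : \int[P]_x ((1 - t)%:E * \int[Q]_x' psi x') = (1 - t)%:E * \int[Q]_x' psi x'.
  by rewrite -[RHS]mule1 -(probability_setT P); exact: integral_cst.
by rewrite -P'E.
Qed.

End transfer.

End resampling.

Section product_TV_bounds.
Context d (T : measurableType d) (R : realType).

Lemma TV_prodp_mix_le (Q M M' : probability T R) (t : R) n :
  (0 <= t <= 1)%R ->
  (forall h : T -> \bar R, measurable_fun setT h -> (forall x, 0 <= h x) ->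
     \int[M']_x h x = t%:E * \int[M]_x h x + (1 - t)%:E * \int[Q]_x h x) ->
  TV (prodp Q n) (prodp M' n) <= TV (prodp Q n) (prodp M n).
Proof.
move=> t01 M'E; apply/ereal_supP => _ [A mA <-].
pose f (z : n.-tuple T) : R := \1_A z.
have mf : measurable_fun setT f by exact: measurable_indic.
have f01 z : (0 <= f z <= 1)%R by rewrite /f indicE; case: (z \in A); rewrite /= ?ler01 ?lexx.
have QE (h : T -> \bar R) : measurable_fun setT h -> (forall x, 0 <= h x) ->
    \int[Q]_x h x = t%:E * \int[Q]_x h x + (1 - t)%:E * \int[Q]_x h x.
  move=> _ h0; case/andP: t01 => t0 t1.
  by rewrite -ge0_muleDl ?lee_fin ?subr_ge0 ?integral_ge0 // -EFinD subrKC mul1e.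
have [mKf Kf01] := resample_itv Q t01 mf f01.
have PAE (P : probability (n.-tuple T) R) : P A = \int[P]_z (f z)%:E.
  by rewrite integral_indic // setIT.
rewrite !PAE -(integral_resample t01 QE mf f01) -(integral_resample t01 M'E mf f01).
have := integral_sub_le_TV mKf Kf01 (prodp Q n) (prodp M n).
have := integral_sub_le_TV mKf Kf01 (prodp M n) (prodp Q n).
rewrite TV_sym -(fineK01 (TV_itv01 _ _)).
rewrite -(fineK01 (integral_itv01 (prodp Q n) mKf Kf01)).
rewrite -(fineK01 (integral_itv01 (prodp M n) mKf Kf01)).
by rewrite -!EFinB !lee_fin => h1 h2; rewrite ler_norml h2 lerNl opprB h1.
Qed.

Lemma TV_prodp_mixture_le (Q G : probability T R) (e : R) (e01 : (0 <= e <= 1)%R) n :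
  TV (prodp Q n) (prodp (mixturep Q G e01) n) <= (1 - (1 - e) ^+ n)%:E.
Proof.
have /andP[e0 e1] := e01; have c0 : (0 <= 1 - e)%R by rewrite subr_ge0.
have QM h : measurable_fun setT h -> (forall x, 0 <= h x) ->
    (1 - e)%:E * \int[Q]_x h x <= \int[mixturep Q G e01]_x h x.
  move=> mh h0; rewrite integral_mixturep //.
  by rewrite leeDl // mule_ge0 ?lee_fin // integral_ge0.
apply/ereal_supP => _ [A mA <-].
have lowA := prodp_dominated c0 QM mA.
have := prodp_dominated c0 QM (measurableC mA).
rewrite !probability_setC //; move: lowA.
case: (probability_fineE (prodp Q n) mA) => -> /andP[a0 a1].
case: (probability_fineE (prodp (mixturep Q G e01) n) mA) => -> /andP[b0 b1].
rewrite -!EFinB -!EFinM !lee_fin => lA lC.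
have cn0 : (0 <= (1 - e) ^+ n)%R by rewrite exprn_ge0.
have cn1 : ((1 - e) ^+ n <= 1)%R by rewrite exprn_ile1 // lerBlDr lerDl.
by rewrite ler_norml; apply/andP; split; nra.
Qed.

End product_TV_bounds.

Lemma cvg_natr_powRN (R : realType) (c : R) : (0 < c)%R ->
  (fun n : nat => (n%:R `^ (- c))%R) @ \oo --> (0 : R)%R.
Proof.
move=> c0; apply/cvgrPdist_lt => eps eps0.
set z := ((eps^-1) `^ (c^-1))%R.
have z0 : (0 <= z)%R by exact: powR_ge0.
exists (Num.truncn z).+1 => // n /= Nn.
rewrite sub0r normrN ger0_norm ?powR_ge0 //.
have zn : (z < n%:R)%R.
  have /andP[_ h] := truncn_itv z0; apply: lt_le_trans h _; by rewrite ler_nat.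
have n0 : (0 < n%:R :> R)%R by apply: le_lt_trans zn.
have : (z `^ c < n%:R `^ c)%R by apply: gt0_ltr_powR => //; rewrite nnegrE ltW.
have -> : (z `^ c = eps^-1)%R.
  by rewrite /z -powRrM mulVf ?gt_eqF // powRr1 // invr_ge0 ltW.
by move=> h; rewrite powRN -(invrK eps) ltf_pV2 ?posrE ?invr_gt0 ?powR_gt0.
Qed.

Lemma onem_exprn_le (R : realType) (e : R) (n : nat) : (0 <= e <= 1)%R ->
  (1 - (1 - e) ^+ n <= n%:R * e)%R.
Proof.
move=> /andP[e0 e1]; elim: n => [|n IH]; first by rewrite expr0 subrr mul0r.
have h0 : (0 <= (1 - e) ^+ n)%R by rewrite exprn_ge0 // subr_ge0.
have h1 : ((1 - e) ^+ n <= 1)%R by rewrite exprn_ile1 // ?subr_ge0 // lerBlDr lerDl.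
rewrite exprS -natr1; nra.
Qed.

Lemma natr_powRN_itv01 (R : realType) (n : nat) (b : R) : (0 <= b)%R ->
  (0 <= n%:R `^ (- b) <= 1)%R.
Proof.
move=> b0; rewrite powR_ge0 /=; case: n => [|n].
  have [->|bn0] := eqVneq b 0%R; first by rewrite oppr0 powRr0.
  by rewrite powR0 ?oppr_eq0.
rewrite -[leRHS](powRr0 (n.+1%:R : R)); apply: ler_powR; first by rewrite ler1n.
by rewrite oppr_le0.
Qed.

Lemma mixture_shrinkE (R : realType) (e t : R) (a g : \bar R) : (0 <= t <= 1)%R ->
  (0 <= e <= 1)%R -> 0 <= a -> 0 <= g ->
  (1 - t * e)%:E * a + (t * e)%:E * g
    = t%:E * ((1 - e)%:E * a + e%:E * g) + (1 - t)%:E * a.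
Proof.
move=> /andP[t0 t1] /andP[e0 e1] a0 g0.
rewrite ge0_muleDr ?mule_ge0 ?lee_fin ?subr_ge0 // !muleA -!EFinM addeAC.
have s1 : (0 <= (t * (1 - e))%:E) by rewrite lee_fin mulr_ge0 // subr_ge0.
have s2 : (0 <= (1 - t)%:E) by rewrite lee_fin subr_ge0.
rewrite -(ge0_muleDl _ s1 s2) -EFinD.
by congr (_ * _ + _); congr EFin; ring.
Qed.

Section V_n.
Context d (T : measurableType d) (R : realType) (Q G : nat -> probability T R).

Lemma Vn_prodp n (b : R) (b0 : (0 <= b)%R) :
  Vn Q G n b = TV (prodp (Q n) n) (prodp (mixturep (Q n) (G n) (natr_powRN_itv01 n b0)) n).
Proof.
apply: eq_TV => A mA; first exact: prodnE.
exact: (prodnE (mixturep (Q n) (G n) (natr_powRN_itv01 n b0)) mA).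
Qed.

Lemma Vn_ge0 n (b : R) : (0 <= b)%R -> 0 <= Vn Q G n b.
Proof.
move=> b0; rewrite (Vn_prodp n b0).
by have /andP[] := TV_itv01 (prodp (Q n) n)
  (prodp (mixturep (Q n) (G n) (natr_powRN_itv01 n b0)) n).
Qed.

Lemma Vn_cvg0 (b : R) : (1 < b)%R -> (fun n => Vn Q G n b) @ \oo --> 0.
Proof.
move=> b1; have b0 : (0 <= b)%R by apply: ltW; apply: lt_trans b1.
apply: (@squeeze_cvge _ _ _ _ (cst 0) _ (fun n => (n%:R `^ (- (b - 1)))%:E)).
- exists 1%N => // n /= n1; rewrite Vn_ge0 //= (Vn_prodp n b0).
  apply: le_trans (TV_prodp_mixture_le _ _ _ _) _.
  rewrite lee_fin; apply: le_trans (onem_exprn_le _ (natr_powRN_itv01 n b0)) _.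
  rewrite opprB addrC powRD ?powRr1 // 1?mulrC //.
  by apply/implyP => _; rewrite pnatr_eq0 -lt0n.
- exact: cvg_cst.
- by apply: cvg_EFin; [exact: nearW|apply: cvg_natr_powRN; rewrite subr_gt0].
Qed.

Lemma Vn_nonincreasing n (b1 b2 : R) : (0 < n)%N -> (0 <= b2)%R -> (b2 <= b1)%R ->
  Vn Q G n b1 <= Vn Q G n b2.
Proof.
move=> n0 b20 b21; have b10 : (0 <= b1)%R by apply: le_trans b21.
rewrite (Vn_prodp n b10) (Vn_prodp n b20).
set e1 := (n%:R `^ (- b1))%R; set e2 := (n%:R `^ (- b2))%R.
have e20 : (0 < e2)%R by apply: powR_gt0; rewrite ltr0n.
have e12 : (e1 <= e2)%R by apply: ler_powR; rewrite ?ler1n ?lerN2.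
have e10 : (0 <= e1)%R by exact: powR_ge0.
pose t := (e1 / e2)%R.
have t01 : (0 <= t <= 1)%R.
  by apply/andP; split; [exact: divr_ge0 e10 (ltW e20)|rewrite /t ler_pdivrMr // mul1r].
have e1E : e1 = (t * e2)%R by rewrite /t divfK // gt_eqF.
apply: (TV_prodp_mix_le _ t01) => h mh h0.
rewrite !integral_mixturep // e1E mixture_shrinkE ?integral_ge0 //.
exact: natr_powRN_itv01.
Qed.

Lemma Vn_cvg1_cvg0_le (b1 b2 : R) : (0 <= b2)%R ->
  (fun n => Vn Q G n b1) @ \oo --> 1 -> (fun n => Vn Q G n b2) @ \oo --> 0 ->
  (b1 <= b2)%R.
Proof.
move=> b20 cv1 cv2; rewrite leNgt; apply/negP => b21.
have := @lee_lim _ _ _ _ (fun n => Vn Q G n b1) (fun n => Vn Q G n b2)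
  (cvgP _ cv1) (cvgP _ cv2).
have /[swap]/[apply] : \forall n \near \oo, Vn Q G n b1 <= Vn Q G n b2.
  by exists 1%N => // n /= n1; apply: Vn_nonincreasing => //; exact: ltW.
by rewrite (cvg_lim _ cv1) // (cvg_lim _ cv2) // lee_fin ler10.
Qed.

End V_n.

Theorem lemma1 (d : measure_display) (T : measurableType d) (R : realType)
    (Q G : nat -> probability T R) :
  0 <= beta_low Q G /\ beta_low Q G <= beta_up Q G /\ beta_up Q G <= 1.
Proof.
split; first by apply: ereal_sup_ubound; left.
split.
  apply: ge_ereal_sup => x [->|[b1 [_ cv1] <-]];
    apply: le_ereal_inf_tmp => _ [b2 [b20 cv2] <-]; rewrite lee_fin //.
  exact: Vn_cvg1_cvg0_le cv1 cv2.
apply/lee_addgt0Pr => e e0; apply: ereal_inf_lbound; exists (1 + e)%R => //.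
by split; [rewrite addr_ge0 // ltW|apply: Vn_cvg0; rewrite ltrDl].
Qed.
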